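(* Let $k\geq 1$ be a fixed integer, $p=\frac{\log n+(k+1)\log\log n-\log\log\log n}{n}$, $G=G(n,p)$ and $D=\frac{\log n}{\log\log n}$. Call a vertex $v$ small if $d_G(v)<\frac{\log n}{100}$. Then almost surely there do not exist two distinct small vertices of $G$ at distance at most $\frac{3}{4}D$ in $G$.
   Context: $\log$ is the natural logarithm; $G(n,p)$ is the binomial random graph on $n$ vertices, $n\to\infty$; ''almost surely'' means with probability tending to $1$; $d_G(v)$ is the degree of $v$ in $G$. *)

From HB Require Import structures.
From mathcomp Require Import all_boot all_order all_algebra.
From mathcomp Require Import all_classical all_reals all_analysis.
Set Implicit Arguments. Unset Strict Implicit. Unset Printing Implicit Defensive.
Import Order.TTheory GRing.Theory Num.Theory numFieldNormedType.Exports.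
Local Open Scope ring_scope.

Definition pairs (n : nat) : {set {set 'I_n}} := [set e : {set 'I_n} | #|e| == 2%N].

Definition graphs (n : nat) : {set {set {set 'I_n}}} :=
  [set E : {set {set 'I_n}} | E \subset pairs n].

Definition adj (n : nat) (E : {set {set 'I_n}}) (u v : 'I_n) : bool :=
  (u != v) && ([set u; v] \in E).

Definition deg (n : nat) (E : {set {set 'I_n}}) (v : 'I_n) : nat :=
  #|[set w | adj E v w]|.

(* reach E t u v : there is a walk of length at most t from u to v,
   i.e. dist_G(u,v) <= t. *)
Fixpoint reach (n : nat) (E : {set {set 'I_n}}) (t : nat) (u v : 'I_n) : bool :=
  match t with
  | 0 => u == v
  | t'.+1 => reach E t' u v || [exists w, reach E t' u w && adj E w v]
  end.

Definition Gnp_prob (R : realType) (n : nat) (p : R)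
    (P : {set {set 'I_n}} -> Prop) : R :=
  \sum_(E in graphs n)
     (if `[< P E >] then p ^+ #|E| * (1 - p) ^+ (#|pairs n| - #|E|) else 0).

Definition almost_surely (R : realType) (p : nat -> R)
    (P : forall n, {set {set 'I_n}} -> Prop) : Prop :=
  ((fun n => Gnp_prob (p n) (@P n)) @ \oo --> (1 : R^o))%classic.

Definition p_lemma4 (R : realType) (k : nat) (n : nat) : R :=
  (ln (n%:R) + (k.+1)%:R * ln (ln (n%:R)) - ln (ln (ln (n%:R)))) / n%:R.

Definition D_lemma4 (R : realType) (n : nat) : R := ln (n%:R) / ln (ln (n%:R)).

Definition small (R : realType) (n : nat) (E : {set {set 'I_n}}) (v : 'I_n) : Prop :=
  ((deg E v)%:R : R) < ln (n%:R) / 100.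

From HB Require Import structures.
From mathcomp Require Import all_boot all_order all_algebra.
From mathcomp Require Import all_classical all_reals all_analysis.
From mathcomp Require Import ring lra.
Set Implicit Arguments. Unset Strict Implicit. Unset Printing Implicit Defensive.
Import Order.TTheory GRing.Theory Num.Theory.
Local Open Scope ring_scope.

(* First moment method with an exponential tilt.  Let d = log n / 100 and lam = e^-4.
   For a path u = x_0, ..., x_l = v of G, let X be the number of edges of G joining u or
   v to a vertex off the path.  If u and v are small then X < 2d, so the random variable
   1{the path lies in G} * e^(8d) * lam^X is at least 1.  It is a product of independent
   edge variables, with expectation e^(8d) p^l (1 - p + p lam)^(2(n-l-1)).  Summing over
   the at most n^(l+1) paths of each length l <= 3/4 D, and using log n <= np <= 2 log n,
   (np)^l <= n^(3/4 + o(1)) and (1 - p + p lam)^(2n) <= n^(-15/8 + o(1)), the expected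
   number of such paths is at most n^(1 + 3/4 + 8/100 - 15/8 + o(1)) = o(1). *)

Section GnpExpectation.
Variables (R : realType) (n : nat) (p : R).
Implicit Types (E J : {set {set 'I_n}}) (P : {set {set 'I_n}} -> Prop).

Definition Gnp_weight E : R := p ^+ #|E| * (1 - p) ^+ (#|pairs n| - #|E|).

Lemma prod_pairs_mem_weight J : J \subset pairs n ->
  \prod_(e in pairs n) (if e \in J then p else 1 - p) = Gnp_weight J.
Proof.
move=> sJ; rewrite (bigID (mem J)) /=.
rewrite [X in X * _](eq_bigr (fun _ => p)); last by move=> e /andP[_ ->].
rewrite [X in _ * X](eq_bigr (fun _ => 1 - p)); last by move=> e /andP[_ /negbTE->].
rewrite !prodr_const /Gnp_weight; congr (_ ^+ _ * _ ^+ _).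
  by apply: eq_card => e; rewrite unfold_in /= andbC; apply/andb_idr/(fintype.subsetP sJ).
rewrite -(cardsID J (pairs n)) (finset.setIidPr sJ) addKn.
by apply: eq_card => e; rewrite unfold_in /= !inE andbC.
Qed.

Lemma Gnp_expect_prod (phi : {set 'I_n} -> bool -> R) :
  \sum_(E in graphs n) Gnp_weight E * \prod_(e in pairs n) phi e (e \in E) =
  \prod_(e in pairs n) (p * phi e true + (1 - p) * phi e false).
Proof.
rewrite [RHS]big_mkcond /=.
rewrite [RHS](eq_bigr (fun e => (if e \in pairs n then p * phi e true else 0) +
                          (if e \in pairs n then (1 - p) * phi e false else 1))); last first.
  by move=> e _; case: ifP; rewrite ?add0r.
rewrite bigA_distr /= [RHS](bigID (mem (graphs n))) /=.
rewrite [X in _ = _ + X]big1 ?addr0; last first.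
  move=> J; rewrite inE => /subsetPn[e eJ ep].
  by rewrite (bigD1 e) //= eJ (negbTE ep) mul0r.
apply: eq_bigr => J; rewrite inE => sJ.
rewrite -prod_pairs_mem_weight // -big_split /= [RHS]big_mkcond [LHS]big_mkcond.
apply: eq_bigr => e _; case: ifP => [_|ep]; first by case: ifP.
by rewrite (contraFF (fintype.subsetP sJ e)).
Qed.

Lemma Gnp_weight_sum : \sum_(E in graphs n) Gnp_weight E = 1.
Proof.
have := Gnp_expect_prod (fun _ _ => 1).
rewrite (eq_bigr Gnp_weight) => [->|E _]; last by rewrite big1 ?mulr1.
by rewrite big1 // => e _; ring.
Qed.

Lemma Gnp_probC P : Gnp_prob p (fun E => ~ P E) = 1 - Gnp_prob p P.
Proof.
apply/eqP; rewrite eq_sym subr_eq -Gnp_weight_sum /Gnp_prob -big_split /=.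
apply/eqP/eq_bigr => E _.
by case: asboolP => h; case: asboolP => //; rewrite ?addr0 ?add0r.
Qed.

Hypothesis p01 : 0 <= p <= 1.

Lemma Gnp_weight_ge0 E : 0 <= Gnp_weight E.
Proof. by case/andP: p01 => p0 p1; rewrite mulr_ge0 ?exprn_ge0 ?subr_ge0. Qed.

Lemma Gnp_prob_ge0 P : 0 <= Gnp_prob p P.
Proof. by apply: sumr_ge0 => E _; case: asboolP => _; rewrite ?Gnp_weight_ge0. Qed.

Lemma Gnp_prob_le_expect P (f : {set {set 'I_n}} -> R) :
  (forall E, 0 <= f E) -> (forall E, P E -> 1 <= f E) ->
  Gnp_prob p P <= \sum_(E in graphs n) Gnp_weight E * f E.
Proof.
move=> f0 fP; apply: ler_sum => E _; rewrite -/(Gnp_weight E).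
case: asboolP => [/fP f1|_]; last by rewrite mulr_ge0 ?Gnp_weight_ge0.
by rewrite -[X in X <= _]mulr1 ler_wpM2l ?Gnp_weight_ge0.
Qed.

End GnpExpectation.

Section Paths.
Variable n : nat.
Implicit Types (x y u v : 'I_n) (s : seq 'I_n) (E : {set {set 'I_n}}).

Fixpoint path_edges x s : {set {set 'I_n}} :=
  if s is y :: s' then [set x; y] |: path_edges y s' else finset.set0.

Lemma mem_path_edges x s e : e \in path_edges x s -> {subset e <= x :: s}.
Proof.
elim: s x => [|y s IH] x /=; first by rewrite inE.
rewrite !inE => /orP[/eqP -> z|/IH sub z /sub zys]; last by rewrite inE zys orbT.
by rewrite !inE => /orP[]->; rewrite ?orbT.
Qed.

Lemma card_path_edges x s : uniq (x :: s) -> #|path_edges x s| = size s.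
Proof.
elim: s x => [|y s IH] x /=; first by rewrite cards0.
case/andP=> xys /andP[ys us]; rewrite cardsU1 IH /= ?ys ?us //.
suff -> : [set x; y] \notin path_edges y s by [].
apply: contra xys => /mem_path_edges/(_ x).
by rewrite !inE eqxx; apply.
Qed.

Lemma path_edges_pairs x s : uniq (x :: s) -> path_edges x s \subset pairs n.
Proof.
elim: s x => [|y s IH] x /=; first by rewrite finset.sub0set.
case/andP=> xys /andP[ys us]; rewrite finset.subUset finset.sub1set IH /= ?ys ?us // andbT.
by rewrite inE cards2; move: xys; rewrite inE negb_or => /andP[->].
Qed.

Lemma path_edges_sub E x s : path (adj E) x s -> path_edges x s \subset E.
Proof.
elim: s x => [|y s IH] x /=; first by rewrite finset.sub0set.
by case/andP=> /andP[_ xyE] ps; rewrite finset.subUset finset.sub1set xyE IH.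
Qed.

Lemma reach_path E t u v : reach E t u v ->
  exists s, [/\ path (adj E) u s, last u s = v & (size s <= t)%N].
Proof.
elim: t v => [|t IH] v /=; first by move/eqP->; exists [::].
case/orP=> [/IH[s [ps ls st]]|/existsP[w /andP[/IH[s [ps ls st]] wv]]].
  by exists s; split => //; apply: leqW.
by exists (rcons s v); rewrite rcons_path last_rcons size_rcons ps ls.
Qed.

Lemma reach_uniq_path E t u v : reach E t u v ->
  exists s, [/\ path (adj E) u s, uniq (u :: s), last u s = v & (size s <= t)%N].
Proof.
case/reach_path=> s [ps ls st]; move: ls; case: (shortenP ps) => s' ps' us' ss' ls.
exists s'; split => //; apply: leq_trans st.
by apply: uniq_leq_size => //; case/andP: us'.
Qed.

End Paths.

Section PathWeight.
Variables (R : realType) (n : nat).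
Implicit Types (u v w : 'I_n) (s : seq 'I_n) (E : {set {set 'I_n}}).

Definition lam : R := expR (-4).

Lemma lam_ge0 : 0 <= lam. Proof. exact: expR_ge0. Qed.

Lemma lam_le1 : lam <= 1. Proof. by rewrite expR_le1 oppr_le0. Qed.

Lemma lam_le_inv16 : lam <= 1 / 16.
Proof.
have e1 : 2 <= expR (1 : R) by have := expR_ge1Dx (1 : R); lra.
have e4 : 16 <= expR (4 : R).
  rewrite -[4]mulr1 expRM_natl (_ : 16 = 2 ^+ 4); last by rewrite -natrX.
  by apply: lerXn2r; rewrite ?nnegrE ?expR_ge0.
have : lam * expR 4 = 1 by rewrite mulrC expRxMexpNx_1.
by have := lam_ge0; nra.
Qed.

Definition off_path u s : {set 'I_n} := [set z | z \notin u :: s].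

Definition end_edges u s : {set {set 'I_n}} :=
  [set [set u; w] | w in off_path u s] :|: [set [set last u s; w] | w in off_path u s].

(* [\prod_(e in pairs n) edge_factor u s e (e \in E)] is the random variable
   [1{path_edges u s \subset E} * lam ^ #|end_edges u s :&: E|]. *)
Definition edge_factor u s (e : {set 'I_n}) (b : bool) : R :=
  if e \in path_edges u s then b%:R else if b && (e \in end_edges u s) then lam else 1.

Lemma edge_factor_ge0 u s e b : 0 <= edge_factor u s e b.
Proof. by rewrite /edge_factor; do 2?case: ifP => _; rewrite ?ler0n ?lam_ge0. Qed.

Lemma card_end_edges_setI E u s :
  (#|end_edges u s :&: E| <= deg E u + deg E (last u s))%N.
Proof.
set v := last u s.
have adj_off a w : a \in u :: s -> w \in off_path u s -> [set a; w] \in E -> adj E a w.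
  by move=> aus; rewrite inE /adj => wus ->; rewrite andbT; apply: contraNneq wus => <-.
have sub : end_edges u s :&: E \subset
    ((fun w => [set u; w]) @: [set w | adj E u w]) :|: ((fun w => [set v; w]) @: [set w | adj E v w]).
  apply/fintype.subsetP => e; rewrite !inE => /andP[/orP[] /imsetP[w wS ->] eE].
    by apply/orP; left; apply/imsetP; exists w; rewrite // inE adj_off ?mem_head.
  by apply/orP; right; apply/imsetP; exists w; rewrite // inE adj_off ?mem_last.
apply: leq_trans (subset_leq_card sub) (leq_trans (leq_card_setU _ _) _).
by apply: leq_add; apply: leq_imset_card.
Qed.

Lemma prod_edge_factor_ge E u s : path (adj E) u s ->
  lam ^+ (deg E u + deg E (last u s)) <= \prod_(e in pairs n) edge_factor u s e (e \in E).
Proof.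
move=> ps; set X := end_edges u s :&: E.
apply: le_trans (_ : lam ^+ #|X| <= _).
  by apply: ler_wiXn2l; rewrite ?lam_ge0 ?lam_le1 ?card_end_edges_setI.
have le_prod_X : lam ^+ #|X| <= \prod_(e in pairs n) (if e \in X then lam else 1).
  rewrite -big_mkcondr prodr_const; apply: ler_wiXn2l; rewrite ?lam_ge0 ?lam_le1 //.
  by apply/subset_leq_card/fintype.subsetP => e /andP[].
have /fintype.subsetP path_in_E := path_edges_sub ps.
apply: (le_trans le_prod_X); apply: ler_prod => e _; rewrite /edge_factor inE.
case: (boolP (e \in path_edges u s)) => [/path_in_E -> | _].
  by case: ifP; rewrite ?mulr1n ?lam_ge0 ?lam_le1 ?ler01 ?lexx.
by case: (e \in E); case: (e \in end_edges u s); rewrite ?lam_ge0 ?lexx ?ler01.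
Qed.

Lemma end_edge_notin_path_edges u s e : e \in end_edges u s -> e \notin path_edges u s.
Proof.
move=> eD; apply/negP => /mem_path_edges e_on_path.
have [w wS we] : exists2 w, w \in off_path u s & w \in e.
  by move: eD; rewrite inE => /orP[]/imsetP[w wS ->]; exists w; rewrite // !inE eqxx orbT.
by move: wS; rewrite inE e_on_path.
Qed.

Lemma end_edges_pairs u s : end_edges u s \subset pairs n.
Proof.
apply/fintype.subsetP => e; rewrite !inE => /orP[]/imsetP[w wS ->]; rewrite cards2.
  by suff -> : u != w by []; apply: contraTneq wS => <-; rewrite inE mem_head.
by suff -> : last u s != w by []; apply: contraTneq wS => <-; rewrite inE mem_last.
Qed.

Lemma card_off_path u s : uniq (u :: s) -> #|off_path u s| = (n - (size s).+1)%N.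
Proof.
move=> us; rewrite cardsCs card_ord; congr (_ - _)%N.
rewrite -[(size s).+1]/(size (u :: s)) -(card_uniqP us).
by apply: eq_card => z; rewrite !inE negbK.
Qed.

Lemma card_end_edges u s : uniq (u :: s) -> s != [::] ->
  #|end_edges u s| = (2 * (n - (size s).+1))%N.
Proof.
move=> us s_nil; set v := last u s.
have uv : u != v.
  by case: s us s_nil @v => // y s /= /andP[uys _] _; apply: contraNneq uys => ->; apply: mem_last.
have card_star a : a \in u :: s -> #|[set [set a; w] | w in off_path u s]| = #|off_path u s|.
  move=> aus; apply: card_in_imset => w1 w2 w1S w2S eq12.
  have : w1 \in [set a; w2] by rewrite -eq12 !inE eqxx orbT.
  by rewrite !inE => /orP[/eqP a1|/eqP //]; move: w1S; rewrite inE a1 aus.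
rewrite cardsU (card_star u (mem_head _ _)) (card_star v (mem_last _ _)) card_off_path //.
suff -> : [set [set u; w] | w in off_path u s] :&: [set [set v; w] | w in off_path u s] =
  finset.set0 by rewrite cards0 subn0 addnn -mul2n.
apply/setP => e; rewrite !inE; apply/negP => /andP[/imsetP[w1 _ ->] /imsetP[w2 w2S e12]].
have : u \in [set v; w2] by rewrite -e12 !inE eqxx.
rewrite !inE => /orP[/eqP uv'|/eqP uw2]; first by rewrite uv' eqxx in uv.
by move: w2S; rewrite inE -uw2 mem_head.
Qed.

Definition mean_lam (p : R) : R := 1 - p + p * lam.

Lemma mean_lam_ge0 p : 0 <= p <= 1 -> 0 <= mean_lam p.
Proof. by case/andP=> p0 p1; rewrite addr_ge0 ?subr_ge0 ?mulr_ge0 ?lam_ge0. Qed.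

Lemma mean_lam_le1 p : 0 <= p <= 1 -> mean_lam p <= 1.
Proof.
case/andP=> p0 p1; have : p * lam <= p by rewrite ler_piMr ?lam_le1.
by rewrite /mean_lam; lra.
Qed.

Lemma prod_edge_factor_mean p u s : uniq (u :: s) -> s != [::] ->
  \prod_(e in pairs n) (p * edge_factor u s e true + (1 - p) * edge_factor u s e false) =
  p ^+ size s * mean_lam p ^+ (2 * (n - (size s).+1)).
Proof.
move=> us s_nil.
rewrite (eq_bigr (fun e => if e \in path_edges u s then p
          else if e \in end_edges u s then mean_lam p else 1)); last first.
  by move=> e _; rewrite /edge_factor /mean_lam; do 2?case: ifP => _ /=; ring.
rewrite (bigID (mem (path_edges u s))) /=.
rewrite [X in X * _](eq_bigr (fun _ => p)); last by move=> e /andP[_ ->].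
rewrite [X in _ * X](eq_bigr (fun e => if e \in end_edges u s then mean_lam p else 1));
  last by move=> e /andP[_ /negbTE->].
rewrite -big_mkcondr !prodr_const -(card_end_edges us s_nil) -(card_path_edges us).
congr (_ ^+ _ * _ ^+ _); apply: eq_card => e; rewrite unfold_in /=.
  by rewrite andbC; apply/andb_idr/(fintype.subsetP (path_edges_pairs us)).
apply/idP/idP => [/andP[_ ->]//|eD].
by rewrite eD end_edge_notin_path_edges ?(fintype.subsetP (end_edges_pairs u s)).
Qed.

End PathWeight.

Lemma ler_sum_term (R : numDomainType) (I : finType) (i : I) (F : I -> R) :
  (forall j, 0 <= F j) -> F i <= \sum_j F j.
Proof. by move=> F0; rewrite (bigD1 i) //= lerDl sumr_ge0. Qed.

Section FirstMoment.
Variables (R : realType) (n : nat).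
Implicit Types (u v : 'I_n) (s : seq 'I_n) (E : {set {set 'I_n}}) (d x p : R).

Definition close_small_pair d x E : Prop :=
  exists u v : 'I_n, u != v /\ ((deg E u)%:R : R) < d /\ ((deg E v)%:R : R) < d /\
    exists t : nat, (t%:R : R) <= x /\ reach E t u v.

Definition path_weight d u s E : R :=
  if uniq (u :: s) && (s != [::]) then
    expR (8 * d) * \prod_(e in pairs n) edge_factor R u s e (e \in E)
  else 0.

Definition short_paths_weight d m E : R :=
  \sum_(i < m.+1) \sum_u \sum_(s : i.-tuple 'I_n) path_weight d u s E.

Lemma path_weight_ge0 d u s E : 0 <= path_weight d u s E.
Proof.
rewrite /path_weight; case: ifP => _ //.
by rewrite mulr_ge0 ?expR_ge0 ?prodr_ge0 // => e _; apply: edge_factor_ge0.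
Qed.

Lemma short_paths_weight_ge0 d m E : 0 <= short_paths_weight d m E.
Proof. by do 3 (apply: sumr_ge0 => ? _); apply: path_weight_ge0. Qed.

Lemma short_paths_weight_ge1 d x E :
  close_small_pair d x E -> 1 <= short_paths_weight d (Num.truncn x) E.
Proof.
case=> u [v [uv [du [dv [t [tx /reach_uniq_path[s [ps us ls st]]]]]]]].
have s_nil : s != [::] by apply: contraNneq uv => s0; rewrite -ls s0.
have size_s : (size s < (Num.truncn x).+1)%N.
  have x0 : 0 <= x := le_trans (ler0n _ _) tx.
  by rewrite ltnS Num.Theory.truncn_ge_nat // (le_trans _ tx) // ler_nat.
have weight_le : path_weight d u (in_tuple s) E <= short_paths_weight d (Num.truncn x) E.
  apply: le_trans (ler_sum_term (Ordinal size_s) _) => [|j]; last first.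
    by do 2 (apply: sumr_ge0 => ? _); apply: path_weight_ge0.
  apply: le_trans (ler_sum_term u _) => [|w]; last by apply: sumr_ge0 => ? _; apply: path_weight_ge0.
  have := @ler_sum_term _ _ (in_tuple s) (fun s' : (size s).-tuple 'I_n => path_weight d u s' E).
  by apply => s'; apply: path_weight_ge0.
apply: le_trans weight_le; rewrite /path_weight us s_nil /=.
apply: le_trans (ler_wpM2l (expR_ge0 _) (prod_edge_factor_ge R ps)); rewrite ls.
rewrite -(expRM_natl (deg E u + deg E v)) -expRD natrD.
by apply: le_trans (expR_ge1Dx _); lra.
Qed.

Lemma expect_path_weight_le p d u s : 0 <= p <= 1 ->
  \sum_(E in graphs n) Gnp_weight p E * path_weight d u s E <=
  expR (8 * d) * (p ^+ size s * mean_lam p ^+ (2 * (n - (size s).+1))).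
Proof.
move=> p01; have [/andP[us s_nil]|not_path] := boolP (uniq (u :: s) && (s != [::])).
  rewrite (eq_bigr (fun E => expR (8 * d) *
    (Gnp_weight p E * \prod_(e in pairs n) edge_factor R u s e (e \in E)))) => [|E _].
    by rewrite -big_distrr Gnp_expect_prod prod_edge_factor_mean.
  by rewrite /path_weight us s_nil /=; ring.
rewrite big1 => [|E _]; last by rewrite /path_weight (negbTE not_path) mulr0.
by rewrite mulr_ge0 ?expR_ge0 ?mulr_ge0 ?exprn_ge0 ?mean_lam_ge0 //; case/andP: p01.
Qed.

Lemma expect_short_paths_weight_le p d m : 0 <= p <= 1 ->
  \sum_(E in graphs n) Gnp_weight p E * short_paths_weight d m E <=
  \sum_(i < m.+1) (n ^ i.+1)%:R * (expR (8 * d) * (p ^+ i * mean_lam p ^+ (2 * (n - i.+1)))).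
Proof.
move=> p01; under eq_bigr do rewrite big_distrr; rewrite exchange_big /=.
apply: ler_sum => i _.
under eq_bigr do rewrite big_distrr; rewrite exchange_big /=.
apply: le_trans (_ : \sum_(u : 'I_n) \sum_(s : i.-tuple 'I_n)
    expR (8 * d) * (p ^+ i * mean_lam p ^+ (2 * (n - i.+1))) <= _).
  apply: ler_sum => u _; under eq_bigr do rewrite big_distrr; rewrite exchange_big /=.
  by apply: ler_sum => s _; have := expect_path_weight_le d u s p01; rewrite size_tuple.
by rewrite !sumr_const card_tuple card_ord -mulrnA -expnSr [X in _ <= X]mulr_natl.
Qed.

Lemma short_path_term_le p d m i : (i <= m)%N -> 0 <= p <= 1 -> 1 <= n%:R * p ->
  (n ^ i.+1)%:R * (expR (8 * d) * (p ^+ i * mean_lam p ^+ (2 * (n - i.+1)))) <=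
  n%:R * (n%:R * p) ^+ m * expR (8 * d) * mean_lam p ^+ (2 * (n - m.+1)).
Proof.
move=> im p01 np1; have [p0 p1] := andP p01.
have -> : (n ^ i.+1)%:R * (expR (8 * d) * (p ^+ i * mean_lam p ^+ (2 * (n - i.+1)))) =
    n%:R * (n%:R * p) ^+ i * expR (8 * d) * mean_lam p ^+ (2 * (n - i.+1)).
  by rewrite expnS natrM natrX exprMn; ring.
apply: ler_pM; rewrite ?exprn_ge0 ?mean_lam_ge0 ?mulr_ge0 ?expR_ge0 ?ler0n //.
- by rewrite exprn_ge0 // mulr_ge0 ?ler0n.
- by rewrite ler_wpM2r ?expR_ge0 // ler_wpM2l ?ler0n // ler_weXn2l.
- by apply: ler_wiXn2l; rewrite ?mean_lam_ge0 ?mean_lam_le1 // leq_mul2l leq_sub2l.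
Qed.

Lemma close_small_pair_prob_le p d x : 0 <= p <= 1 -> 1 <= n%:R * p ->
  Gnp_prob p (close_small_pair d x) <=
  (Num.truncn x).+1%:R * (n%:R * (n%:R * p) ^+ Num.truncn x * expR (8 * d) *
                           mean_lam p ^+ (2 * (n - (Num.truncn x).+1))).
Proof.
move=> p01 np1; set m := Num.truncn x.
apply: le_trans (Gnp_prob_le_expect p01 (short_paths_weight_ge0 d m)
  (@short_paths_weight_ge1 d x)) _.
apply: le_trans (expect_short_paths_weight_le d m p01) _.
have term_le (i : 'I_m.+1) (_ : true) := short_path_term_le d (ltnSE (ltn_ord i)) p01 np1.
apply: le_trans (ler_sum _ term_le) _.
by rewrite sumr_const card_ord [X in _ <= X]mulr_natl.
Qed.

End FirstMoment.

Section Asymptotics.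
Variables (R : realType) (k n : nat).

Let N : R := n%:R.
Let L : R := ln N.
Let LL : R := ln L.
Let K : R := k.+1%:R.
Let p : R := p_lemma4 R k n.
Let m : nat := Num.truncn (3 / 4 * (L / LL)).

Hypothesis n_large : expR (expR (1000 + 2 * K)) <= N.

Lemma N_gt0 : 0 < N.
Proof. exact: lt_le_trans (expR_gt0 _) n_large. Qed.

Lemma L_ge_expR : expR (1000 + 2 * K) <= L.
Proof. by rewrite -[X in X <= _]expRK ler_ln ?posrE ?expR_gt0 ?N_gt0. Qed.

Lemma L_gt0 : 0 < L.
Proof. exact: lt_le_trans (expR_gt0 _) L_ge_expR. Qed.

Lemma LL_ge : 1000 + 2 * K <= LL.
Proof. by rewrite -[X in X <= _]expRK ler_ln ?posrE ?expR_gt0 ?L_gt0 ?L_ge_expR. Qed.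

Lemma K_ge1 : 1 <= K. Proof. by rewrite ler1n. Qed.

Lemma LL_ge1000 : 1000 <= LL.
Proof. by have := LL_ge; have := K_ge1; lra. Qed.

Lemma expR_LL : expR LL = L.
Proof. by rewrite lnK ?posrE ?L_gt0. Qed.

Lemma LL_sqr_le : LL ^+ 2 / 2 <= L.
Proof.
have LL0 : 0 <= LL by have := LL_ge1000; lra.
have := expR_ge1Dxn 1 LL0; rewrite expR_LL.
by change ((1.+1)`!%:R) with (2 : R); lra.
Qed.

Lemma L_cube_le : L ^+ 3 / 6 <= N.
Proof.
have := expR_ge1Dxn 2 (ltW L_gt0); rewrite lnK ?posrE ?N_gt0 //.
by change ((2.+1)`!%:R) with (6 : R); lra.
Qed.

Lemma LL_le : LL <= L / 500.
Proof. by have := LL_sqr_le; have := LL_ge1000; nra. Qed.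

Lemma L_ge1000 : 1000 <= L.
Proof. by have := LL_le; have := LL_ge1000; lra. Qed.

Lemma Np_eq : N * p = L + K * LL - ln LL.
Proof. by rewrite /p /p_lemma4 mulrC divfK // gt_eqF ?N_gt0. Qed.

Lemma Np_bounds : L <= N * p <= 2 * L.
Proof.
have LL1 : 1 <= LL by have := LL_ge1000; lra.
have lnLL_lt : ln LL < LL by apply: ln_sublinear; lra.
have lnLL_ge0 : 0 <= ln LL by apply: ln_ge0.
have KLL : K * LL <= L by have := LL_sqr_le; have := LL_ge; have := K_ge1; nra.
by rewrite Np_eq; apply/andP; split; have := K_ge1; nra.
Qed.

Lemma m_le : m%:R <= 3 / 4 * (L / LL).
Proof.
rewrite /m Num.Theory.truncn_le mulr_ge0 // divr_ge0 ?(ltW L_gt0) //.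
by have := LL_ge1000; lra.
Qed.

Lemma L_div_LL_le : L / LL <= L / 1000.
Proof.
have LL1000 := LL_ge1000.
by rewrite ler_pM2l ?L_gt0 // lef_pV2 ?posrE; lra.
Qed.

Lemma m1_le_L : m.+1%:R <= L.
Proof.
by rewrite -natr1; have := m_le; have := L_div_LL_le; have := L_ge1000; lra.
Qed.

Lemma pm1_le1 : p * m.+1%:R <= 1.
Proof.
rewrite -(ler_pM2l N_gt0) mulr1 mulrA.
apply: le_trans (_ : 2 * L * L <= _).
  apply: ler_pM; rewrite ?m1_le_L ?ler0n //; have := Np_bounds; have := L_gt0; lra.
by have := L_cube_le; have := L_ge1000; nra.
Qed.

Lemma p_bounds : 0 <= p <= 1.
Proof.
have Np0 : 0 <= N * p by have := Np_bounds; have := L_gt0; lra.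
have p0 : 0 <= p by rewrite -(pmulr_rge0 _ N_gt0).
have := pm1_le1; have : 1 <= m.+1%:R :> R by rewrite ler1n.
by rewrite p0 /=; nra.
Qed.

Lemma Np_ge1 : 1 <= N * p.
Proof. by have := Np_bounds; have := L_ge1000; lra. Qed.

Lemma m1_le_n : (m.+1 <= n)%N.
Proof.
rewrite -(ler_nat R); apply/ltW/(le_lt_trans m1_le_L).
exact: ln_sublinear N_gt0.
Qed.

Lemma Np_expn_le : (N * p) ^+ m <= expR (3 / 4 * L + 3 / 4 * (L / LL)).
Proof.
have [L_le_Np Np_le_2L] := andP Np_bounds.
have Np0 : 0 < N * p by have := L_gt0; lra.
have ln2 : ln (2 : R) <= 1 by have := @le_ln1Dx R 1; rewrite (_ : 1 + 1 = 2) //; apply; lra.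
have ln_Np : ln (N * p) <= 1 + LL.
  have : ln (N * p) <= ln (2 * L) by rewrite ler_ln ?posrE // mulr_gt0 ?L_gt0.
  by rewrite [ln (2 * L)]lnM ?posrE ?L_gt0 // -/LL; lra.
rewrite -[N * p]lnK ?posrE // -expRM_natl ler_expR.
have lnNp0 : 0 <= ln (N * p) by apply: ln_ge0; exact: Np_ge1.
apply: le_trans (_ : 3 / 4 * (L / LL) * (1 + LL) <= _).
  by apply: ler_pM; rewrite ?ler0n ?m_le.
have LL_neq0 : LL != 0 by rewrite gt_eqF //; have := LL_ge1000; lra.
have -> : 3 / 4 * (L / LL) * (1 + LL) = 3 / 4 * L + 3 / 4 * (L / LL) by field.
exact: lexx.
Qed.

Lemma mean_lam_expn_le : mean_lam p ^+ (2 * (n - m.+1)) <= expR (- (15 / 8) * (L - 1)).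
Proof.
have mean_le : mean_lam p <= expR (- (p * (1 - lam R))).
  by apply: le_trans (expR_ge1Dx _); rewrite /mean_lam; lra.
apply: le_trans (_ : expR (- (p * (1 - lam R))) ^+ (2 * (n - m.+1)) <= _).
  by apply: lerXn2r; rewrite ?nnegrE ?mean_lam_ge0 ?p_bounds ?expR_ge0.
rewrite -expRM_natl ler_expR natrM natrB ?m1_le_n // -/N.
have -> : 2%:R * (N - m.+1%:R) * - (p * (1 - lam R)) =
  - 2 * (1 - lam R) * (N * p - p * m.+1%:R) by ring.
set c := 1 - lam R; set Z := N * p - p * m.+1%:R.
have c_ge : 15 / 16 <= c by rewrite /c; have := lam_le_inv16 R; lra.
have Z_ge : L - 1 <= Z by rewrite /Z; have := pm1_le1; case/andP: Np_bounds; lra.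
have : 15 / 16 * Z <= c * Z by apply: ler_wpM2r => //; have := L_ge1000; lra.
lra.
Qed.

Lemma close_small_pair_bound :
  m.+1%:R * (N * (N * p) ^+ m * expR (8 * (L / 100)) * mean_lam p ^+ (2 * (n - m.+1)))
  <= expR (- (L / 100)).
Proof.
have Np0 : 0 <= N * p by case/andP: Np_bounds; have := L_gt0; lra.
have q0 : 0 <= mean_lam p by rewrite mean_lam_ge0 ?p_bounds.
have expR_L : expR L = N by rewrite lnK ?posrE ?N_gt0.
apply: le_trans (_ : expR LL * (expR L * expR (3 / 4 * L + 3 / 4 * (L / LL)) *
    expR (8 * (L / 100)) * expR (- (15 / 8) * (L - 1))) <= _).
  rewrite expR_LL expR_L; apply: ler_pM; rewrite ?ler0n ?m1_le_L //.
    by rewrite !mulr_ge0 ?ler0n ?expR_ge0 ?exprn_ge0.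
  apply: ler_pM; rewrite ?mean_lam_expn_le ?exprn_ge0 ?mulr_ge0 ?ler0n ?expR_ge0 //.
    exact: exprn_ge0.
  by rewrite ler_wpM2r ?expR_ge0 // ler_wpM2l ?ler0n ?Np_expn_le.
rewrite -!expRD ler_expR.
have := LL_le; have := L_div_LL_le; have := L_ge1000; lra.
Qed.

Lemma close_small_pair_prob_lemma4 :
  Gnp_prob p (@close_small_pair R n (L / 100) (3 / 4 * (L / LL))) <= expR (- (L / 100)).
Proof.
apply: le_trans close_small_pair_bound.
exact: close_small_pair_prob_le p_bounds Np_ge1.
Qed.

End Asymptotics.

Lemma almost_surely_not (R : realType) (p : nat -> R)
    (Q : forall n, {set {set 'I_n}} -> Prop) :
  ((fun n => Gnp_prob (p n) (Q n)) @ \oo --> (0 : R^o))%classic ->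
  almost_surely p (fun n E => ~ Q n E).
Proof.
move=> Q0; rewrite /almost_surely.
under eq_fun do rewrite Gnp_probC.
have : ((fun n => 1 - Gnp_prob (p n) (Q n)) @ \oo --> (1 - 0 : R^o))%classic.
  by apply: cvgB => //; apply: cvg_cst.
by rewrite subr0.
Qed.

Lemma cvg0_le_expR_ln (R : realType) (c : R) (u : nat -> R) : 0 < c ->
  (\forall n \near \oo, 0 <= u n <= expR (- (ln n%:R / c)))%classic ->
  (u @ \oo --> (0 : R^o))%classic.
Proof.
move=> c0 u_small; apply/cvgrPdist_le => eps eps0.
apply: filterS2 (nbhs_infty_ger (expR (- (c * ln eps)))) u_small => n n_ge /andP[u0 u_le].
rewrite sub0r normrN ger0_norm //; apply: le_trans u_le _.
have ln_n_ge : - (c * ln eps) <= ln n%:R.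
  rewrite -[X in X <= _]expRK ler_ln ?posrE ?expR_gt0 //.
  exact: lt_le_trans (expR_gt0 _) n_ge.
rewrite -[X in _ <= X]lnK ?posrE // ler_expR lerNl ler_pdivlMr //.
by rewrite mulrC; lra.
Qed.

Theorem lemma4 (R : realType) (k : nat) (hk : (1 <= k)%N) :
  almost_surely (p_lemma4 R k)
    (fun n E => ~ exists u v : 'I_n, u != v /\ small R E u /\ small R E v /\
        exists t : nat, (t%:R : R) <= 3 / 4 * D_lemma4 R n /\ reach E t u v).
Proof.
apply: (@almost_surely_not _ _
  (fun n => @close_small_pair R n (ln n%:R / 100) (3 / 4 * D_lemma4 R n))).
apply: (@cvg0_le_expR_ln _ 100) => //.
apply: filterS (@nbhs_infty_ger R (expR (expR (1000 + 2 * k.+1%:R)))) => n n_large.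
rewrite (Gnp_prob_ge0 (p_bounds n_large)) /=.
exact: close_small_pair_prob_lemma4 n_large.
Qed.
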